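(* Every continuous valuation $\nu$ on a topological space $X$ that takes only finitely many distinct values is point-continuous.
   Context: A valuation on $X$ is a map $\nu:\mathcal OX\to[0,\infty]$ with $\nu(\emptyset)=0$, monotone and modular; continuous if it preserves directed suprema of opens. A valuation $\nu$ is point-continuous if for every open $U$ and every real $r$ with $0\le r<\nu(U)$ there is a finite subset $A\subseteq U$ such that $\nu(V)>r$ for every open $V\supseteq A$. *)

From mathcomp Require Import all_boot all_order all_algebra.
From mathcomp Require Import all_classical all_reals topology ereal.
Set Implicit Arguments. Unset Strict Implicit. Unset Printing Implicit Defensive.
Import Order.TTheory GRing.Theory Num.Theory.
Local Open Scope classical_set_scope.
Local Open Scope ring_scope.
Local Open Scope ereal_scope.

(* A valuation on the opens of a topological space X, with values in [0, +oo].
   nu is given as a map on all subsets, but only its values on opens matter. *)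
Definition valuation (R : realType) (X : topologicalType) (nu : set X -> \bar R) : Prop :=
  [/\ nu set0 = 0,
      (forall U, open U -> 0 <= nu U),
      (forall U V, open U -> open V -> U `<=` V -> nu U <= nu V) &
      (forall U V, open U -> open V -> nu (U `|` V) + nu (U `&` V) = nu U + nu V)].

Definition directed_open_family (X : topologicalType) (D : set (set X)) : Prop :=
  [/\ D !=set0,
      (forall U, D U -> open U) &
      (forall U V, D U -> D V -> exists2 W, D W & U `|` V `<=` W)].

Definition continuous_valuation (R : realType) (X : topologicalType)
  (nu : set X -> \bar R) : Prop :=
  valuation nu /\
  forall D : set (set X), directed_open_family D ->
    nu (\bigcup_(U in D) U) = ereal_sup (nu @` D).

Definition point_continuous (R : realType) (X : topologicalType)
  (nu : set X -> \bar R) : Prop :=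
  forall (U : set X) (r : R), open U -> (0 <= r)%R -> r%:E < nu U ->
    exists A : set X, [/\ finite_set A, A `<=` U &
      forall V : set X, open V -> A `<=` V -> r%:E < nu V].

From mathcomp Require Import all_boot all_order all_algebra.
From mathcomp Require Import finmap all_classical all_reals topology ereal.
Local Open Scope classical_set_scope.

Import Order.TTheory GRing.Theory Num.Theory.

(** For a finite [A] contained in the open [U], let [m(A)] be the least value
  of [nu] on the opens [V] with [A ⊆ V ⊆ U]. Since [nu] takes finitely many
  values, this least value is attained, and some finite [A] maximizes [m].
  Enlarging such an [A] inside [U] leaves [m(A)] unchanged, so the opens
  between [A] and [U] on which [nu] equals [m(A)] cover [U]. When [m(A)] is
  finite they also form a directed family: if [V] and [W] are two of them,
  minimality forces [nu (V ∩ W) = m(A)], and modularity then gives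
  [nu (V ∪ W) = m(A)]. Continuity yields [nu U = m(A)], and [A] witnesses
  point-continuity because [nu V >= nu (V ∩ U) >= m(A)] for every open [V]
  containing [A]. *)

Lemma finite_set_min {d} {T : orderType d} {S : set T} :
  finite_set S -> S !=set0 -> exists2 x, S x & lbound S x.
Proof.
move=> /finite_fsetP[F ->] [x0 Fx0].
have [i _ i_min] := arg_minP (fun i : F => val i) (isT : predT (FSetSub Fx0)).
by exists (val i) => [|y Fy]; [exact: valP | exact: (i_min (FSetSub Fy))].
Qed.

Lemma finite_set_max {d} {T : orderType d} {S : set T} :
  finite_set S -> S !=set0 -> exists2 x, S x & ubound S x.
Proof. exact: (@finite_set_min _ T^d). Qed.

Section finite_ereal_extrema.
Context {R : realType}.
Local Open Scope ereal_scope.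
Implicit Types S : set (\bar R).

Lemma finite_ereal_inf_mem S : finite_set S -> S !=set0 -> S (ereal_inf S).
Proof.
move=> fS S0; have [x Sx x_lb] := finite_set_min fS S0.
suff -> : ereal_inf S = x by [].
by apply/le_anti; rewrite ereal_inf_lbound //= le_ereal_inf_tmp.
Qed.

Lemma finite_ereal_sup_mem S : finite_set S -> S !=set0 -> S (ereal_sup S).
Proof.
move=> fS S0; have [x Sx x_ub] := finite_set_max fS S0.
suff -> : ereal_sup S = x by [].
by apply/le_anti; rewrite ereal_sup_ubound //= andbT ge_ereal_sup.
Qed.

End finite_ereal_extrema.

Definition opens_between {X : topologicalType} (A U : set X) :=
  [set V : set X | [/\ open V, A `<=` V & V `<=` U]].

Lemma opens_between_self {X : topologicalType} {A U : set X} :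
  open U -> A `<=` U -> opens_between A U U.
Proof. by split. Qed.

Section valuation_finite_range.
Context {R : realType} {X : topologicalType} (nu : set X -> \bar R).
Hypothesis nu_valuation : valuation nu.
Local Open Scope ereal_scope.

Lemma valuationU_eq {V W : set X} : open V -> open W ->
  nu (V `&` W) = nu V -> nu V \is a fin_num -> nu (V `|` W) = nu W.
Proof.
case: nu_valuation => _ _ _ nu_modular oV oW nuVW finV.
move: (nu_modular _ _ oV oW); rewrite nuVW [RHS]addeC.
by move=> /(congr1 (fun x => x - nu V)); rewrite !addeK.
Qed.

Definition inf_between (A U : set X) := ereal_inf (nu @` opens_between A U).

Lemma inf_between_le_open {A U V : set X} : open U -> open V -> A `<=` U ->
  A `<=` V -> inf_between A U <= nu V.
Proof.
case: nu_valuation => _ _ nu_mono _ oU oV AU AV.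
have oVU : open (V `&` U) by exact: openI.
apply: (@le_trans _ _ (nu (V `&` U))); last exact: nu_mono.
apply: ereal_inf_lbound; exists (V `&` U) => //; split => // x Ax.
by split; [apply: AV | apply: AU].
Qed.

Lemma le_inf_between {A B : set X} (U : set X) :
  A `<=` B -> inf_between A U <= inf_between B U.
Proof.
move=> AB; apply: ereal_inf_le_tmp => _ [V [oV BV VU] <-].
by exists V => //; split => //; apply: subset_trans AB BV.
Qed.

Lemma inf_between_ge0 (A U : set X) : 0 <= inf_between A U.
Proof.
case: nu_valuation => _ nu_ge0 _ _.
by apply: le_ereal_inf_tmp => _ [V [oV _ _] <-]; exact: nu_ge0.
Qed.

Hypothesis nu_finite_range : finite_set (nu @` [set U : set X | open U]).

Lemma inf_between_mem {A U : set X} : open U -> A `<=` U ->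
  exists2 V, opens_between A U V & nu V = inf_between A U.
Proof.
move=> oU AU.
have : (nu @` opens_between A U) (inf_between A U).
  apply: finite_ereal_inf_mem; last first.
    by exists (nu U), U; first exact: opens_between_self.
  by apply: sub_finite_set nu_finite_range => _ [V [oV _ _] <-]; exists V.
by case=> V; exists V.
Qed.

Definition inf_between_stable (A U : set X) :=
  forall B, finite_set B -> A `<=` B -> B `<=` U -> inf_between B U = inf_between A U.

Lemma exists_inf_between_stable {U : set X} : open U ->
  exists A, [/\ finite_set A, A `<=` U & inf_between_stable A U].
Proof.
move=> oU.
pose S := [set inf_between A U | A in [set A | finite_set A /\ A `<=` U]].
have : S (ereal_sup S).
  apply: finite_ereal_sup_mem; last first.
    by exists (inf_between set0 U), set0; split; [exact: finite_set0 | exact: sub0set].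
  apply: sub_finite_set nu_finite_range => _ [A [_ AU] <-].
  by have [V [oV _ _] <-] := inf_between_mem oU AU; exists V.
case=> A [finA AU] supA; exists A; split => // B finB AB BU.
apply/le_anti; rewrite (le_inf_between U AB) andbT supA.
by apply: ereal_sup_ubound; exists B.
Qed.

Definition minimizing_opens (A U : set X) :=
  [set V | opens_between A U V /\ nu V = inf_between A U].

Lemma minimizing_opens_directed {A U : set X} : open U -> A `<=` U ->
  inf_between A U \is a fin_num -> directed_open_family (minimizing_opens A U).
Proof.
move=> oU AU fin_inf; split.
- by have [V ? ?] := inf_between_mem oU AU; exists V.
- by move=> V [[]].
move=> V W [[oV AV VU] nuV] [[oW AW WU] nuW].
have oVW : open (V `&` W) by exact: openI.
have nuVW : nu (V `&` W) = nu V.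
  case: nu_valuation => _ _ nu_mono _.
  apply/le_anti/andP; split; first by apply: nu_mono => //; exact: subIsetl.
  rewrite nuV; apply: inf_between_le_open => // x Ax.
  by split; [apply: AV | apply: AW].
exists (V `|` W) => //; split; last by rewrite valuationU_eq // nuV.
split; first exact: openU.
- by move=> x /AV; left.
- by move=> x [/VU|/WU].
Qed.

Lemma bigcup_minimizing_opens {A U : set X} : open U -> finite_set A ->
  A `<=` U -> inf_between_stable A U -> \bigcup_(V in minimizing_opens A U) V = U.
Proof.
move=> oU finA AU A_stable; apply/seteqP; split; first by move=> x [V [[_ _ VU] _]] /VU.
move=> x Ux.
have AxU : A `|` [set x] `<=` U by move=> y [/AU|->].
have [V [oV AxV VU] nuV] := inf_between_mem oU AxU.
exists V; last by apply: AxV; right.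
split; first by split => // y Ay; apply: AxV; left.
by rewrite nuV A_stable // finite_setU; split; [exact: finA | exact: finite_set1].
Qed.

Lemma continuous_valuation_eq_inf_between {A U : set X} :
  continuous_valuation nu -> open U -> finite_set A -> A `<=` U -> inf_between_stable A U ->
  nu U = inf_between A U.
Proof.
move=> nu_cont oU finA AU A_stable.
apply/le_anti/andP; split; last first.
  by apply: ereal_inf_lbound; exists U => //; exact: opens_between_self.
have [inf_lt|] := ltP (inf_between A U) +oo; last exact: le_trans (leey _).
have fin_inf : inf_between A U \is a fin_num.
  by rewrite ge0_fin_numE // inf_between_ge0.
rewrite -{1}(bigcup_minimizing_opens oU finA AU A_stable).
rewrite nu_cont.2; last exact: minimizing_opens_directed.
have -> : nu @` minimizing_opens A U = [set inf_between A U].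
  apply/seteqP; split => [_ [V [_ ->]] <- // | _ ->].
  by have [V ? ?] := inf_between_mem oU AU; exists V.
by rewrite ereal_sup1.
Qed.

End valuation_finite_range.

Theorem proposition4p4 (R : realType) (X : topologicalType) (nu : set X -> \bar R) :
  continuous_valuation nu ->
  finite_set (nu @` [set U : set X | open U]) ->
  point_continuous nu.
Proof.
move=> nu_cont nu_fin U r oU _ rU.
have nu_val := nu_cont.1.
have [A [finA AU A_stable]] := exists_inf_between_stable nu nu_fin oU.
exists A; split => // V oV AV.
have nuU : nu U = inf_between nu A U.
  exact: continuous_valuation_eq_inf_between.
by rewrite (lt_le_trans rU) // nuU (inf_between_le_open nu nu_val oU oV AU AV).
Qed.
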